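(* Let $G$ be a finite abelian group with identity $0$, and let $M$ and $N$ be matroids over $G$, both of rank $n$, such that $|E(M)|=|E(N)|=n+1<p(G)$. Assume that $|(-a+E(M))\cap E(N)|\neq n$ for all $a\in E(M)$, and that $E(M)$ is neither a progression nor a semi-progression. If $0\notin E(N)$, then $M$ is matched to $N$.
   Context: $p(G)$ denotes the smallest cardinality of a nonzero subgroup of $G$. For $a\in G$ and $X\subseteq G$, $-a+X=\{-a+x: x\in X\}$. A progression of length $k$ with difference $x$ and initial term $a$ is a set $\{a,a+x,\dots,a+(k-1)x\}$; a set $A$ is a semi-progression if $A\setminus\{a\}$ is a progression for some $a\in A$. A matroid over $G$ is a matroid $M$ whose finite ground set $E(M)$ is a subset of $G$; all matroids are assumed loopless. For matroids $M,N$ over $G$ with $r(M)=r(N)=n>0$ and bases $\mathcal{M}=\{a_1,\dots,a_n\}$ of $M$ and $\mathcal{N}=\{b_1,\dots,b_n\}$ of $N$, $\mathcal{M}$ is matched to $\mathcal{N}$ if there is a permutation $\pi\in S_n$ with $a_i+b_{\pi(i)}\notin E(M)$ for all $i$. $M$ is matched to $N$ if for every basis $\mathcal{M}$ of $M$ there exists a basis $\mathcal{N}$ of $N$ such that $\mathcal{M}$ is matched to $\mathcal{N}$. *)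

From HB Require Import structures.
From mathcomp Require Import all_boot all_order all_algebra.
Set Implicit Arguments. Unset Strict Implicit. Unset Printing Implicit Defensive.
Import GRing.Theory.
Local Open Scope ring_scope.

Definition is_subgroup (G : finZmodType) (H : {set G}) : bool :=
  (0 \in H) && [forall x in H, forall y in H, x - y \in H].

(* p(G): the smallest cardinality of a nonzero subgroup of G.
   If G is trivial (no nonzero subgroup) we use the default #|G|.+1. *)
Definition pG (G : finZmodType) : nat :=
  \big[minn/#|G|.+1]_(H : {set G} | is_subgroup H && (H != [set 0])) #|H|.

Definition translate (G : finZmodType) (a : G) (X : {set G}) : {set G} :=
  [set - a + x | x in X].

Definition progression (G : finZmodType) (A : {set G}) : Prop :=
  exists (a x : G) (k : nat), A = [set a + x *+ (nat_of_ord i) | i : 'I_k].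

Definition semi_progression (G : finZmodType) (A : {set G}) : Prop :=
  exists2 a, a \in A & progression (A :\ a).

Record matroid (G : finZmodType) := Matroid {
  E : {set G};
  indep : {set G} -> bool;
  indep_ground : forall A : {set G}, indep A -> A \subset E;
  indep0 : indep set0;
  indep_sub : forall A B : {set G}, B \subset A -> indep A -> indep B;
  indep_aug : forall A B : {set G}, indep A -> indep B -> (#|A| < #|B|)%N ->
                exists2 x, x \in B :\: A & indep (x |: A);
  loopless : forall x, x \in E -> indep [set x]
}.

Definition rank (G : finZmodType) (M : matroid G) : nat :=
  \max_(A : {set G} | indep M A) #|A|.

Definition basis (G : finZmodType) (M : matroid G) (B : {set G}) : bool :=
  indep M B && [forall C : {set G}, (indep M C && (B \subset C)) ==> (C == B)].

Definition basis_matched (G : finZmodType) (M : matroid G) (BM BN : {set G}) : Prop :=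
  exists f : G -> G, [/\ {in BM &, injective f}, f @: BM = BN &
                         forall a, a \in BM -> a + f a \notin E M].

Definition matched (G : finZmodType) (M N : matroid G) : Prop :=
  forall BM, basis M BM -> exists2 BN, basis N BN & basis_matched M BM BN.

From mathcomp Require Import all_boot all_order all_algebra.
From mathcomp Require Import zify.

(* Fix any basis B_N of N and match a basis B_M to it by Hall's theorem, where
   a ~ b iff a + b is not in E(M).  If Hall's condition fails at S ⊆ B_M, the
   non-neighbours T of S in B_N satisfy S + ({0} ∪ T) ⊆ E(M) and
   |S| + |T| >= n + 1, so the Cauchy-Davenport bound below p(G) (Kemperman)
   gives S + ({0} ∪ T) = E(M) with |S| + |T| = n + 1.  If S = {a}, then
   T ⊆ (-a + E(M)) ∩ E(N) has n elements; otherwise Vosper's theorem, which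
   also holds below p(G), makes E(M) a progression.  Both are excluded. *)

Section Hall.
#[local] Set Implicit Arguments.
#[local] Unset Strict Implicit.
Variable T : finType.
Implicit Types (adj : rel T) (B S X : {set T}).

Definition neighbours adj S : {set T} := [set b | [exists a in S, adj a b]].

Definition avoiding adj B : rel T := [rel a b | adj a b && (b \notin B)].

Definition hall_condition adj X :=
  forall S, S \subset X -> #|S| <= #|neighbours adj S|.

Definition matching adj X (f : T -> T) :=
  {in X &, injective f} /\ {in X, forall a, adj a (f a)}.

Lemma neighboursU adj S1 S2 :
  neighbours adj (S1 :|: S2) = neighbours adj S1 :|: neighbours adj S2.
Proof.
apply/setP=> b; rewrite !inE; apply/exists_inP/orP.
  by case=> a; rewrite inE => /orP[] aS ab; [left | right]; apply/exists_inP; exists a.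
by case=> /exists_inP[a aS ab]; exists a; rewrite // inE aS ?orbT.
Qed.

Lemma neighbours_avoiding adj B S :
  neighbours adj S \subset B :|: neighbours (avoiding adj B) S.
Proof.
apply/subsetP=> b; rewrite !inE => /exists_inP[a aS ab].
case: (boolP (b \in B)) => //= bB; apply/exists_inP; exists a => //; exact/andP.
Qed.

Lemma hall_condition_avoid_critical adj X X0 :
  hall_condition adj X -> X0 \subset X -> #|neighbours adj X0| <= #|X0| ->
  hall_condition (avoiding adj (neighbours adj X0)) (X :\: X0).
Proof.
move=> hallX sX0X critX0 S sSX.
set N0 := neighbours adj X0 in critX0 *; set N' := neighbours _ S.
have S0 : S :&: X0 = set0.
  by apply/setP=> a; rewrite !inE; apply/andP=> -[/(subsetP sSX)]; rewrite inE => /andP[/negP].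
have hallSX0 : #|S :|: X0| <= #|neighbours adj S :|: N0|.
  by rewrite -neighboursU; apply: hallX; rewrite subUset sX0X (subset_trans sSX (subsetDl _ _)).
have subN : neighbours adj S :|: N0 \subset N0 :|: N'.
  by rewrite subUset subsetUl neighbours_avoiding.
have := cardsUI S X0; have := cardsUI N0 N'; have := subset_leq_card subN.
rewrite S0 cards0; lia.
Qed.

Lemma hall_condition_avoid_point adj X a0 b0 :
  (forall S, S \subset X -> S != set0 -> S != X -> #|S| < #|neighbours adj S|) ->
  a0 \in X -> hall_condition (avoiding adj [set b0]) (X :\ a0).
Proof.
move=> surplus a0X S sSX; have [->|nS] := eqVneq S set0; first by rewrite cards0.
have sSX' : S \subset X := subset_trans sSX (subsetDl _ _).
have SX : S != X by apply: contraTneq sSX => ->; apply/subsetPn; exists a0; rewrite ?inE ?eqxx.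
have := surplus S sSX' nS SX; have := subset_leq_card (neighbours_avoiding adj [set b0] S).
have := cardsUI [set b0] (neighbours (avoiding adj [set b0]) S); rewrite cards1; lia.
Qed.

Lemma matching_glue adj X X0 B f g :
  X0 \subset X -> matching adj X0 f -> {in X0, forall a, f a \in B} ->
  matching (avoiding adj B) (X :\: X0) g ->
  matching adj X (fun a => if a \in X0 then f a else g a).
Proof.
move=> sX0X [injf adjf] fB [injg adjg].
have gB a : a \in X -> a \notin X0 -> g a \notin B.
  by move=> aX aX0; have := adjg a; rewrite inE aX aX0 => /(_ isT) /andP[].
split=> [a a' aX a'X|a aX].
  case: ifP => aX0; case: ifP => a'X0.
  - exact: injf.
  - by move=> fg; have := gB a' a'X (negbT a'X0); rewrite -fg fB.
  - by move=> fg; have := gB a aX (negbT aX0); rewrite fg fB.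
  - by apply: injg; rewrite inE ?aX0 ?a'X0.
case: ifP => aX0; first exact: adjf.
by have := adjg a; rewrite inE aX aX0 => /(_ isT) /andP[].
Qed.

Theorem Hall_marriage adj X : hall_condition adj X -> exists f, matching adj X f.
Proof.
have [k] := ubnP #|X|; elim: k adj X => // k IH adj X ltXk hallX.
have IH' adj' (Y : {set T}) : #|Y| < #|X| -> hall_condition adj' Y -> exists f, matching adj' Y f.
  by move=> ltYX; apply: IH; apply: leq_trans ltYX _.
have [->|[a0 a0X]] := set_0Vmem X; first by exists id; split=> a; rewrite inE.
(* Either a proper nonempty X0 is critical and X0, X :\: X0 are matched
   separately, or every such set has surplus and any edge a0 b0 can be used. *)
case: (boolP [exists X0 : {set T}, [&& X0 \subset X, X0 != set0, X0 != X &
                                      #|neighbours adj X0| <= #|X0|]]).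
  case/existsP=> X0 /and4P[sX0X nX0 X0X critX0].
  have [f matchf] : exists f, matching adj X0 f.
    apply: IH' => [|S sSX0]; first by rewrite proper_card // properEneq X0X.
    exact/hallX/(subset_trans sSX0).
  have [g matchg] : exists g, matching (avoiding adj (neighbours adj X0)) (X :\: X0) g.
    apply: IH'; last exact: hall_condition_avoid_critical.
    rewrite -card_gt0 in nX0; rewrite cardsD (setIidPr sX0X).
    by have := subset_leq_card sX0X; lia.
  exists (fun a => if a \in X0 then f a else g a); apply: matching_glue matchg => //.
  by move=> a aX0; rewrite inE; apply/exists_inP; exists a => //; apply: matchf.2.
move/existsPn=> noncrit.
have surplus S : S \subset X -> S != set0 -> S != X -> #|S| < #|neighbours adj S|.
  by move=> sSX nS SX; have := noncrit S; rewrite sSX nS SX ltnNge.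
have [b0 ab0] : exists b0, adj a0 b0.
  have /card_gt0P[b0] : 0 < #|neighbours adj [set a0]|.
    by apply: leq_trans (hallX _ _); rewrite ?cards1 ?sub1set.
  by rewrite inE => /exists_inP[a]; rewrite inE => /eqP->; exists b0.
have [g matchg] : exists g, matching (avoiding adj [set b0]) (X :\ a0) g.
  apply: IH'; last exact: hall_condition_avoid_point.
  by rewrite (cardsD1 a0 X) a0X.
exists (fun a => if a \in [set a0] then b0 else g a).
apply: (@matching_glue adj X [set a0] [set b0] (fun=> b0)) matchg.
- by rewrite sub1set.
- by split=> [a a' /set1P-> /set1P->|a /set1P->].
- by move=> a _; rewrite inE.
Qed.

End Hall.

Import GRing.Theory.
Local Open Scope ring_scope.

Section Sumsets.
#[local] Set Implicit Arguments.
#[local] Unset Strict Implicit.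
Context {G : finZmodType}.
Implicit Types (A B H S T Y : {set G}) (a d e s t x y z : G).

Definition shift A x : {set G} := [set a + x | a in A].

Definition sumset S T : {set G} := [set s + t | s in S, t in T].

Lemma mem_shift A x y : (y \in shift A x) = (y - x \in A).
Proof.
apply/imsetP/idP => [[a aA ->]|yxA]; first by rewrite addrK.
by exists (y - x); rewrite ?subrK.
Qed.

Lemma card_shift A x : #|shift A x| = #|A|.
Proof. by apply: card_imset; apply: addIr. Qed.

Lemma shift_shift A x y : shift (shift A x) y = shift A (x + y).
Proof. by apply/setP=> z; rewrite !mem_shift opprD addrA addrAC. Qed.

Lemma shift0 A : shift A 0 = A.
Proof. by apply/setP=> z; rewrite mem_shift subr0. Qed.

Lemma sumsetP S T z :
  reflect (exists2 s, s \in S & exists2 t, t \in T & z = s + t) (z \in sumset S T).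
Proof.
apply: (iffP imset2P) => [[s t sS tT ->]|[s sS [t tT ->]]]; last by exists s t.
by exists s => //; exists t.
Qed.

Lemma mem_sumset S T s t : s \in S -> t \in T -> s + t \in sumset S T.
Proof. by move=> sS tT; apply/sumsetP; exists s => //; exists t. Qed.

Lemma sumsetC S T : sumset S T = sumset T S.
Proof.
by apply/setP=> z; apply/sumsetP/sumsetP=> -[s sS [t tT ->]];
  exists t => //; exists s; rewrite // addrC.
Qed.

Lemma sumsetS S1 S2 T1 T2 :
  S1 \subset S2 -> T1 \subset T2 -> sumset S1 T1 \subset sumset S2 T2.
Proof.
move=> /subsetP sS /subsetP sT; apply/subsetP=> _ /sumsetP[s sS1 [t tT1 ->]].
by apply: mem_sumset; [apply: sS | apply: sT].
Qed.

Lemma sumsetUl S1 S2 T : sumset (S1 :|: S2) T = sumset S1 T :|: sumset S2 T.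
Proof.
apply/setP=> z; rewrite in_setU; apply/sumsetP/orP.
  by case=> s; rewrite in_setU => /orP[] sS [t tT ->]; [left | right]; apply: mem_sumset.
by case=> /sumsetP[s sS [t tT ->]]; exists s; rewrite ?in_setU ?sS ?orbT //; exists t.
Qed.

Lemma sumsetUr S T1 T2 : sumset S (T1 :|: T2) = sumset S T1 :|: sumset S T2.
Proof. by rewrite sumsetC sumsetUl !(sumsetC S). Qed.

Lemma sumset1 S t : sumset S [set t] = shift S t.
Proof.
apply/setP=> z; rewrite mem_shift; apply/sumsetP/idP => [[s sS [_ /set1P-> ->]]|zS].
  by rewrite addrK.
by exists (z - t) => //; exists t; rewrite ?inE ?subrK.
Qed.

Lemma sumset_shiftl S T x : sumset (shift S x) T = shift (sumset S T) x.
Proof.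
apply/setP=> z; rewrite mem_shift; apply/sumsetP/sumsetP=> -[s sS [t tT e]].
  by exists (s - x); rewrite -?mem_shift //; exists t; rewrite // e addrAC.
by exists (s + x); rewrite ?mem_shift ?addrK //; exists t; rewrite // addrAC -e subrK.
Qed.

Lemma shift_sub_sumset S T t : t \in T -> shift S t \subset sumset S T.
Proof. by move=> tT; rewrite -sumset1 sumsetS ?sub1set. Qed.

Lemma leq_card_sumset S T : T != set0 -> (#|S| <= #|sumset S T|)%N.
Proof.
by case/set0Pn=> t tT; rewrite -(card_shift S t) subset_leq_card ?shift_sub_sumset.
Qed.

Lemma pG_le_card_subgroup H : is_subgroup H -> H != [set 0] -> (pG G <= #|H|)%N.
Proof.
move=> subH ntH; rewrite /pG -big_filter.
have: H \in [seq K <- index_enum {set G} | @is_subgroup G K && (K != [set 0])].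
  by rewrite mem_filter subH ntH mem_index_enum.
elim: (filter _ _) => //= K s IHs; rewrite in_cons big_cons => /orP[/eqP<-|/IHs].
  exact: geq_minl.
exact: leq_trans (geq_minr _ _).
Qed.

Definition stabilizer Y := [set h | shift Y h == Y].

Lemma stabilizer_subgroup Y : is_subgroup (stabilizer Y).
Proof.
apply/andP; split; first by rewrite inE shift0.
apply/forall_inP=> h1 /[!inE] /eqP h1Y; apply/forall_inP=> h2 /[!inE] /eqP h2Y.
by rewrite -shift_shift h1Y -{1}h2Y shift_shift subrr shift0.
Qed.

Lemma card_stabilizer_le Y : Y != set0 -> (#|stabilizer Y| <= #|Y|)%N.
Proof.
case/set0Pn=> y yY; rewrite -(card_shift _ y) subset_leq_card //.
apply/subsetP=> _ /imsetP[h /[!inE] /eqP hY ->].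
by rewrite -hY mem_shift addrC addKr.
Qed.

Lemma pG_le_card_stable Y d :
  Y != set0 -> d != 0 -> shift Y d \subset Y -> (pG G <= #|Y|)%N.
Proof.
move=> nY nd sYdY; apply: leq_trans _ (card_stabilizer_le nY).
apply: pG_le_card_subgroup; first exact: stabilizer_subgroup.
apply: contraNneq nd => stab0; apply/eqP/set1P; rewrite -stab0 inE.
by rewrite eqEcard sYdY card_shift leqnn.
Qed.

Definition prog a x k : {set G} := [set a + x *+ (nat_of_ord i) | i : 'I_k].

Lemma prog_progression a x k : progression (prog a x k).
Proof. by exists a, x, k. Qed.

Lemma mem_prog a x k y :
  reflect (exists2 i, (i < k)%N & y = a + x *+ i) (y \in prog a x k).
Proof.
apply: (iffP imsetP) => [[i _ ->]|[i ltik ->]]; first by exists i.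
by exists (Ordinal ltik).
Qed.

Lemma card_prog_le a x k : (#|prog a x k| <= k)%N.
Proof. by rewrite -[k in (_ <= k)%N]card_ord leq_imset_card. Qed.

Lemma prog_succ a x k :
  (0 < k)%N -> prog a x k.+1 = prog a x k :|: shift (prog a x k) x.
Proof.
move=> k_gt0; apply/setP=> y; rewrite in_setU mem_shift.
apply/mem_prog/orP => [[i]|[/mem_prog[i ltik ->]|/mem_prog[i ltik /eqP]]].
- rewrite ltnS leq_eqVlt => /orP[/eqP->|ltik] ->; last by left; apply/mem_prog; exists i.
  right; apply/mem_prog; exists k.-1; first by rewrite prednK.
  by rewrite -{1}(prednK k_gt0) mulrSr addrA addrK.
- by exists i => //; apply: ltnW.
- by rewrite subr_eq -addrA -mulrSr => /eqP->; exists i.+1.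
Qed.

Lemma prog_succr a x k : prog a x k.+1 = (a + x *+ k) |: prog a x k.
Proof.
apply/setP=> y; rewrite in_setU1; apply/mem_prog/orP=> [[i]|[/eqP->|/mem_prog[i ltik ->]]].
- by rewrite ltnS leq_eqVlt => /orP[/eqP->|ltik] ->; [left | right; apply/mem_prog; exists i].
- by exists k.
- by exists i => //; apply: ltnW.
Qed.

Lemma pG_le_of_mulrn_eq0 d j : d != 0 -> (0 < j)%N -> d *+ j = 0 -> (pG G <= j)%N.
Proof.
move=> nd j_gt0 dj0; apply: leq_trans _ (card_prog_le 0 d j).
apply: (pG_le_card_stable _ nd).
  by apply/set0Pn; exists (0 + d *+ 0); apply/mem_prog; exists 0%N.
apply/subsetP=> _ /imsetP[_ /mem_prog[i ltij ->] ->]; apply/mem_prog.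
rewrite -addrA -mulrSr; case: (ltnP i.+1 j) => [ltSij|]; first by exists i.+1.
move=> leji; have -> : i.+1 = j by lia.
by exists 0%N; rewrite // dj0 mulr0n.
Qed.

Lemma mulrn_pG_inj d i j :
  d != 0 -> (i < pG G)%N -> (j < pG G)%N -> d *+ i = d *+ j -> i = j.
Proof.
move=> nd; wlog leij : i j / (i <= j)%N => [W ltiG ltjG eij|].
  by case: (leqP i j) => [leij|/ltnW leji]; [apply: W | symmetry; apply: W].
move=> _ ltjG eij; apply/eqP; rewrite eqn_leq leij leqNgt; apply/negP=> ltij.
have := @pG_le_of_mulrn_eq0 _ (j - i) nd; rewrite subn_gt0 mulrnBr // eij subrr.
by move=> /(_ ltij erefl); lia.
Qed.

Lemma card_prog a x k : x != 0 -> (k <= pG G)%N -> #|prog a x k| = k.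
Proof.
move=> nx lekG; rewrite card_imset ?card_ord // => i j /addrI /mulrn_pG_inj eij.
by apply/val_inj/eij => //; exact: leq_trans (ltn_ord _) lekG.
Qed.

Lemma shift_chain_reaches Y d z y :
  d != 0 -> (#|Y| < pG G)%N -> shift Y d \subset z |: Y -> y \in Y ->
  exists2 j, (0 < j <= #|Y|)%N & z = y + d *+ j.
Proof.
move=> nd ltYG sYd yY; set m := #|Y| in ltYG *.
case: (boolP [exists j : 'I_m.+1, (0 < j)%N && (z == y + d *+ j)]).
  by case/existsP=> j /andP[j_gt0 /eqP->]; exists j; rewrite // j_gt0 -ltnS ltn_ord.
move/existsPn=> missz.
have inY i : (i <= m)%N -> y + d *+ i \in Y.
  elim: i => [|i IHi] leim; first by rewrite mulr0n addr0.
  have := subsetP sYd (y + d *+ i.+1); rewrite mem_shift mulrSr addrA addrK in_setU1.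
  case/(_ (IHi (ltnW leim)))/orP => // /eqP ez.
  by have := missz (Ordinal (leim : (i.+1 < m.+1)%N)); rewrite /= -ez mulrSr addrA eqxx.
have /subset_leq_card : prog y d m.+1 \subset Y.
  by apply/subsetP=> _ /mem_prog[i ltim ->]; apply: inY.
by rewrite card_prog // ltnn.
Qed.

Lemma progression_setU_shift Y d :
  Y != set0 -> d != 0 -> (#|Y :|: shift Y d| <= #|Y|.+1)%N ->
  (#|Y :|: shift Y d| < pG G)%N -> progression (Y :|: shift Y d).
Proof.
move=> nY nd leU ltUG.
have leYU := subset_leq_card (subsetUl Y (shift Y d)).
have [z zYd zNY] : exists2 z, z \in shift Y d & z \notin Y.
  by apply/subsetPn/negP=> /(pG_le_card_stable nY nd); lia.
have eU : Y :|: shift Y d = z |: Y.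
  apply/eqP; rewrite eq_sym eqEcard cardsU1 zNY add1n leU andbT.
  by rewrite subUset sub1set in_setU zYd orbT subsetUl.
have sYd : shift Y d \subset z |: Y by rewrite -eU subsetUr.
suff -> : Y :|: shift Y d = prog z (- d) #|Y|.+1 by apply: prog_progression.
apply/eqP; rewrite eqEcard eU cardsU1 zNY add1n card_prog_le andbT.
apply/subsetP=> x; rewrite in_setU1 => /orP[/eqP->|xY].
  by apply/mem_prog; exists 0%N; rewrite ?mulr0n ?addr0.
have [|j /andP[_ lejY] ->] := shift_chain_reaches nd _ sYd xY; first lia.
by apply/mem_prog; exists j; rewrite ?ltnS // mulNrn addrK.
Qed.

(* Dyson's e-transform of the pair (S, T): S ∪ (T + e) and T ∩ (S - e). *)
Definition dyson_union S T e := S :|: shift T e.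

Definition dyson_meet S T e := [set u in T | u + e \in S].

Lemma dyson_meet_sub S T e : dyson_meet S T e \subset T.
Proof. by apply/subsetP=> u; rewrite inE => /andP[]. Qed.

Lemma sumset_dyson_sub S T e :
  sumset (dyson_union S T e) (dyson_meet S T e) \subset sumset S T.
Proof.
apply/subsetP=> _ /sumsetP[s1 + [u /[!inE] /andP[uT ueS] ->]].
rewrite in_setU mem_shift => /orP[s1S|s1eT]; first exact: mem_sumset.
by rewrite (_ : s1 + u = (u + e) + (s1 - e)) ?mem_sumset // addrCA addrK.
Qed.

Lemma card_dyson S T e :
  (#|dyson_union S T e| + #|dyson_meet S T e| = #|S| + #|T|)%N.
Proof.
have -> : #|dyson_meet S T e| = #|S :&: shift T e|.
  rewrite -(card_shift _ e); apply: eq_card => x.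
  by rewrite in_setI !mem_shift inE subrK andbC.
by rewrite cardsUI card_shift.
Qed.

Theorem Cauchy_Davenport S T :
  S != set0 -> T != set0 -> (#|sumset S T| < pG G)%N ->
  (#|S| + #|T| <= #|sumset S T| + 1)%N.
Proof.
have [k] := ubnP #|T|; elim: k S T => // k IH S T ltTk nS nT ltSTG.
case: (leqP #|T| 1) => [leT1|/card_gt1P[t [t' [tT t'T ntt']]]].
  exact: leq_add (leq_card_sumset S nT) leT1.
have leSST := leq_card_sumset S nT.
(* S is not stable under t' - t below p(G), and then the transform with
   e := s - t keeps t but drops t'. *)
have [stab|/subsetPn[_ /imsetP[s sS ->] nsS]] := boolP (shift S (t' - t) \subset S).
  have := pG_le_card_stable nS _ stab; rewrite subr_eq0 eq_sym ntt' => /(_ isT); lia.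
set e := s - t.
have tTe : t \in dyson_meet S T e by rewrite inE tT addrC subrK.
have t'NTe : t' \notin dyson_meet S T e.
  by rewrite inE t'T /= /e addrCA.
have ltTeT : (#|dyson_meet S T e| < #|T|)%N.
  by rewrite proper_card // properE dyson_meet_sub; apply/subsetPn; exists t'.
have leST := subset_leq_card (sumset_dyson_sub S T e).
have nSe : dyson_union S T e != set0 by apply/set0Pn; exists s; rewrite in_setU sS.
have nTe : dyson_meet S T e != set0 by apply/set0Pn; exists t.
rewrite -(card_dyson S T e) (leq_trans (IH _ _ _ nSe nTe _)) ?leq_add2r //.
  exact: leq_trans ltTeT ltTk.
exact: leq_ltn_trans leST ltSTG.
Qed.

Lemma sumset_dyson_eq S T e :
  dyson_meet S T e != set0 -> (#|sumset S T| < #|S| + #|T|)%N ->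
  (#|sumset S T| < pG G)%N ->
  sumset (dyson_union S T e) (dyson_meet S T e) = sumset S T.
Proof.
move=> nTe ltST ltSTG; have sub := sumset_dyson_sub S T e.
have nSe : dyson_union S T e != set0.
  case/set0Pn: nTe => u /[!inE] /andP[_ ueS]; apply/set0Pn; exists (u + e).
  by rewrite in_setU ueS.
have := Cauchy_Davenport nSe nTe (leq_ltn_trans (subset_leq_card sub) ltSTG).
rewrite card_dyson => CD.
have le : (#|sumset S T| <= #|sumset (dyson_union S T e) (dyson_meet S T e)|)%N by lia.
by apply/eqP; rewrite eqEcard sub.
Qed.

Lemma progression_sumset S T :
  progression S -> (2 <= #|S|)%N -> T != set0 ->
  (#|sumset S T| < #|S| + #|T|)%N -> (#|sumset S T| < pG G)%N ->
  progression (sumset S T).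
Proof.
case=> a [x [k ->]]; rewrite -/(prog a x k) => leS2 nT ltST ltSTG.
have nx : x != 0.
  apply: contraTneq leS2 => x0; rewrite -ltnNge ltnS.
  apply: leq_trans (subset_leq_card (_ : _ \subset [set a])) _; last by rewrite cards1.
  by apply/subsetP=> _ /mem_prog[i _ ->]; rewrite x0 mul0rn addr0 set11.
case: k => [|k] in leS2 ltST ltSTG *; first by have := leq_trans leS2 (card_prog_le a x 0).
have k_gt0 : (0 < k)%N by move: (leq_trans leS2 (card_prog_le a x k.+1)).
set P := prog a x k; set Y := sumset P T.
have eST : sumset (prog a x k.+1) T = Y :|: shift Y x.
  by rewrite prog_succ // sumsetUl sumset_shiftl.
have leSP : (#|prog a x k.+1| <= #|P|.+1)%N.
  by rewrite prog_succr cardsU1 -add1n leq_add2r leq_b1.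
have nP : P != set0 by apply/set0Pn; exists (a + x *+ 0); apply/mem_prog; exists 0%N.
have leYST : (#|Y| <= #|sumset (prog a x k.+1) T|)%N.
  by rewrite eST subset_leq_card ?subsetUl.
have := Cauchy_Davenport nP nT (leq_ltn_trans leYST ltSTG).
rewrite -/Y eST in ltST ltSTG * => CD.
apply: progression_setU_shift => //; last lia.
by rewrite -card_gt0 (leq_trans _ (leq_card_sumset P nT)) ?card_gt0.
Qed.

Lemma progression_sumset_pair S T :
  S != set0 -> #|T| = 2 -> (#|sumset S T| < #|S| + #|T|)%N ->
  (#|sumset S T| < pG G)%N -> progression (sumset S T).
Proof.
move=> nS /eqP/cards2P[t1 [t2 [nt12 ->]]].
have -> : sumset S [set t1; t2] = shift S t1 :|: shift (shift S t1) (t2 - t1).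
  by rewrite sumsetUr !sumset1 shift_shift addrC subrK.
rewrite cards2 nt12 => ltST ltSTG; apply: progression_setU_shift => //.
- by rewrite -card_gt0 card_shift card_gt0.
- by rewrite subr_eq0 eq_sym.
- by move: ltST; rewrite card_shift; lia.
Qed.

Definition minkowski_diff S T := [set e | shift T e \subset S].

Lemma sumset_minkowski_diff_sub S T : sumset (minkowski_diff S T) T \subset S.
Proof.
apply/subsetP=> _ /sumsetP[e /[!inE] /subsetP sTeS [t tT ->]].
by apply: sTeS; rewrite mem_shift addrC addKr.
Qed.

Lemma shiftI_rigid S T t1 t2 :
  (forall e, (1 < #|dyson_meet S T e|)%N -> dyson_meet S T e = T) ->
  t1 \in T -> t2 \in T -> t1 != t2 ->
  shift S t1 :&: shift S t2 = shift (minkowski_diff S T) (t1 + t2).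
Proof.
move=> rigid t1T t2T nt12; apply/setP=> x; rewrite in_setI !mem_shift inE.
set e := x - (t1 + t2).
have et1 : x - t1 = t2 + e by rewrite [RHS]addrC /e opprD addrA subrK.
have et2 : x - t2 = t1 + e by rewrite [RHS]addrC /e opprD addrA addrAC subrK.
rewrite et1 et2; apply/andP/idP => [[t2eS t1eS]|/subsetP sTeS].
  have /rigid eT : (1 < #|dyson_meet S T e|)%N.
    by apply/card_gt1P; exists t1, t2; rewrite !inE t1T t2T t1eS t2eS.
  by apply/subsetP=> _ /imsetP[u uT ->]; move: uT; rewrite -eT inE => /andP[].
by split; apply: sTeS; rewrite mem_shift addrK.
Qed.

Lemma card_setU3_ge (T : finType) (A B C : {set T}) :
  (#|A| + #|B| + #|C| <= #|A :|: B :|: C| + #|A :&: B| + #|A :&: C| + #|B :&: C|)%N.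
Proof.
have := cardsUI A B; have := cardsUI (A :|: B) C; rewrite setIUl.
by have := cardsUI (A :&: C) (B :&: C); lia.
Qed.

Lemma rigid_decomposition S T :
  (3 <= #|T| <= #|S|)%N -> (#|sumset S T| < #|S| + #|T|)%N ->
  (#|sumset S T| < pG G)%N ->
  (forall e, (1 < #|dyson_meet S T e|)%N -> dyson_meet S T e = T) ->
  exists2 P, sumset P T = S & (2 <= #|P|)%N /\ (#|P| + #|T| = #|S| + 1)%N.
Proof.
move=> /andP[le3T leTS] ltST ltSTG rigid; set P := minkowski_diff S T.
have sPT : sumset P T \subset S := sumset_minkowski_diff_sub S T.
have cardI u v : u \in T -> v \in T -> u != v -> #|shift S u :&: shift S v| = #|P|.
  by move=> uT vT nuv; rewrite (shiftI_rigid rigid) // card_shift.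
clearbody P.
have nT : T != set0 by rewrite -card_gt0 (leq_trans _ le3T).
have [t1 [t2 [t1T t2T nt12]]] := card_gt1P (leq_trans (isT : (1 < 3)%N) le3T).
have := cardsUI (shift S t1) (shift S t2); rewrite cardI // !card_shift => cU.
have /subset_leq_card leU : shift S t1 :|: shift S t2 \subset sumset S T.
  by rewrite subUset !shift_sub_sumset.
(* Three translates of S meeting pairwise in one point would give
   3 #|S| - 3 <= #|S + T| < 2 #|S|. *)
have lt1P : (1 < #|P|)%N.
  rewrite ltnNge; apply/negP=> leP1.
  have [t3] : exists t3, t3 \in T :\: [set t1; t2].
    apply/set0Pn; rewrite -card_gt0 cardsD.
    by have := subset_leq_card (subsetIr T [set t1; t2]); rewrite cards2; lia.
  rewrite !inE negb_or !(eq_sym t3) => /andP[/andP[nt13 nt23] t3T].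
  have /subset_leq_card leU3 : shift S t1 :|: shift S t2 :|: shift S t3 \subset sumset S T.
    by rewrite !subUset !shift_sub_sumset.
  have := card_setU3_ge (shift S t1) (shift S t2) (shift S t3).
  by rewrite !cardI // !card_shift; lia.
have nP : P != set0 by rewrite -card_gt0 ltnW.
have leSST := leq_card_sumset S nT.
have := Cauchy_Davenport nP nT (leq_ltn_trans (subset_leq_card sPT) (leq_ltn_trans leSST ltSTG)).
move=> CD; have leSPT : (#|S| <= #|sumset P T|)%N by lia.
have ePT : sumset P T = S by apply/eqP; rewrite eqEcard sPT.
by exists P => //; rewrite ePT in CD; split=> //; lia.
Qed.

Theorem Vosper S T :
  (2 <= #|S|)%N -> (2 <= #|T|)%N -> (#|sumset S T| < #|S| + #|T|)%N ->
  (#|sumset S T| < pG G)%N -> progression (sumset S T).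
Proof.
(* Induction on #|T|, then on #|S|: swapping S and T and the Dyson step
   shrink T, the rigid case replaces S by the smaller P. *)
have [k] := ubnP #|T|; elim: k S T => // k IHT S T ltTk.
have [m] := ubnP #|S|; elim: m S => // m IHS S ltSm leS2 leT2 ltST ltSTG.
have [ltST'|leTS] := ltnP #|S| #|T|.
  rewrite sumsetC; apply: IHT; rewrite ?(sumsetC T) // 1?addnC //.
  exact: leq_trans ltST' ltTk.
have [lt2T|leT2'] := ltnP 2 #|T|; last first.
  apply: progression_sumset_pair => //; first by rewrite -card_gt0 ltnW.
  by apply/eqP; rewrite eqn_leq leT2 leT2'.
have nS : S != set0 by rewrite -card_gt0 ltnW.
have nT : T != set0 by rewrite -card_gt0 ltnW.
case: (boolP [exists e, 1 < #|dyson_meet S T e| < #|T|]%N) =>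
    [/existsP[e /andP[gt1Te ltTeT]]|/existsPn rigid].
  have nTe : dyson_meet S T e != set0 by rewrite -card_gt0 ltnW.
  have eST := sumset_dyson_eq nTe ltST ltSTG.
  rewrite -eST; apply: IHT => //; rewrite ?eST ?card_dyson //.
  - exact: leq_trans ltTeT ltTk.
  - exact: leq_trans leS2 (subset_leq_card (subsetUl _ _)).
have rigidT e : (1 < #|dyson_meet S T e|)%N -> dyson_meet S T e = T.
  move=> gt1Te; apply/eqP; rewrite eqEcard dyson_meet_sub leqNgt.
  by have := rigid e; rewrite gt1Te.
have [|P ePT [leP2 cardP]] := rigid_decomposition _ ltST ltSTG rigidT; first exact/andP.
apply: progression_sumset => //; rewrite -ePT.
apply: IHS; rewrite ?ePT //.
- by move: ltSm cardP lt2T; clear; lia.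
- by move: cardP; clear; lia.
- exact: leq_ltn_trans (leq_card_sumset S nT) ltSTG.
Qed.

Lemma card_translateI_le a A B :
  a \in A -> 0 \notin B -> (#|translate a A :&: B| <= #|A|.-1)%N.
Proof.
move=> aA n0B; have <- : #|translate a A| = #|A| by apply/card_imset/addrI.
rewrite (cardsD1 0 (translate a A)) (_ : 0 \in _); last by apply/imsetP; exists a; rewrite ?addNr.
apply: subset_leq_card; apply/subsetP=> x /setIP[xA xB]; rewrite !inE xA andbT.
by apply: contraNneq n0B => <-.
Qed.

Lemma progression_or_translateI A B S T :
  S != set0 -> T \subset B -> 0 \notin B -> sumset S (0 |: T) \subset A ->
  (#|A| <= #|S| + #|T|)%N -> (#|S| < #|A|)%N -> (#|A| < pG G)%N ->
  progression A \/ exists2 a, a \in A & #|translate a A :&: B| = #|A|.-1.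
Proof.
move=> nS sTB n0B sSTA leAST ltSA ltAG; set T0 := 0 |: T in sSTA.
have cT0 : #|T0| = #|T|.+1 by rewrite cardsU1 (contra (subsetP sTB 0) n0B).
have nT0 : T0 != set0 by apply/set0Pn; exists 0; rewrite setU11.
have leSTA := subset_leq_card sSTA.
have := Cauchy_Davenport nS nT0 (leq_ltn_trans leSTA ltAG); rewrite cT0 => CD.
have eA : sumset S T0 = A.
  have leAST' : (#|A| <= #|sumset S T0|)%N by lia.
  by apply/eqP; rewrite eqEcard sSTA.
have [leS1|lt1S] := leqP #|S| 1; [right | left].
  have /cards1P[a eS] : #|S| == 1%N by rewrite eqn_leq leS1 card_gt0.
  have aA : a \in A by rewrite -eA eS -{1}[a]addr0 mem_sumset ?set11 ?setU11.
  exists a => //; apply/eqP; rewrite eqn_leq card_translateI_le //=.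
  have -> : #|A|.-1 = #|T| by move: leAST ltSA leSTA CD; rewrite eS cards1; lia.
  apply/subset_leq_card/subsetP=> t tT; rewrite inE (subsetP sTB) // andbT.
  apply/imsetP; exists (a + t); last by rewrite addKr.
  by rewrite -eA eS mem_sumset ?set11 // setU1r.
have leT02 : (2 <= #|T0|)%N by lia.
have ltAST0 : (#|A| < #|S| + #|T0|)%N by lia.
by rewrite -eA; apply: Vosper; rewrite ?eA.
Qed.
End Sumsets.

Section Matroids.
#[local] Set Implicit Arguments.
#[local] Unset Strict Implicit.
Context {G : finZmodType} {M : matroid G}.
Implicit Types (A B I : {set G}).

Lemma indep_card_le_rank I : indep M I -> (#|I| <= rank M)%N.
Proof. by move=> indI; apply: (@leq_bigmax_cond _ (indep M) (fun A => #|A|)). Qed.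

Lemma exists_indep_rank : exists2 I, indep M I & #|I| = rank M.
Proof.
have [|I indI eI] := @eq_bigmax_cond _ [pred A | indep M A] (fun A => #|A|).
  by apply/card_gt0P; exists set0; rewrite inE indep0.
by exists I; rewrite // /rank eI.
Qed.

Lemma basis_card B : basis M B -> #|B| = rank M.
Proof.
case/andP=> indB /forallP maxB; apply/eqP; rewrite eqn_leq indep_card_le_rank //=.
rewrite leqNgt; apply/negP=> ltB; have [I indI eI] := exists_indep_rank.
rewrite -eI in ltB; have [x /setDP[_ xNB] indxB] := indep_aug indB indI ltB.
by have := maxB (x |: B); rewrite indxB subsetUr => /eqP eB; rewrite -eB setU11 in xNB.
Qed.

Lemma basis_sub B : basis M B -> B \subset E M.
Proof. by case/andP=> /indep_ground. Qed.

Lemma exists_basis : exists B, basis M B.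
Proof.
have [I indI eI] := exists_indep_rank; exists I; rewrite /basis indI.
apply/forallP=> C; apply/implyP=> /andP[indC sIC].
by rewrite eq_sym eqEcard sIC eI indep_card_le_rank.
Qed.

End Matroids.

Lemma basis_matched_hall {G : finZmodType} (M : matroid G) (BM BN : {set G}) :
  #|BM| = #|BN| ->
  hall_condition [rel a b | (b \in BN) && (a + b \notin E M)] BM ->
  basis_matched M BM BN.
Proof.
move=> cB /Hall_marriage[f [injf adjf]]; exists f; split=> // [|a /adjf /andP[] //].
apply/eqP; rewrite eqEcard card_in_imset // cB leqnn andbT.
by apply/subsetP=> _ /imsetP[a /adjf /andP[fa _] ->].
Qed.

Theorem theorem2p12 (G : finZmodType) (M N : matroid G) (n : nat) :
  (0 < n)%N ->
  rank M = n -> rank N = n ->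
  #|E M| = n.+1 -> #|E N| = n.+1 -> (n.+1 < pG G)%N ->
  (forall a, a \in E M -> #|translate a (E M) :&: E N| <> n) ->
  ~ progression (E M) -> ~ semi_progression (E M) ->
  0 \notin E N ->
  matched M N.
Proof.
move=> _ rM rN cM _ ltnG translateI nprog _ n0N BM basisBM.
have [BN basisBN] := exists_basis (M := N).
exists BN => //; apply: basis_matched_hall.
  by rewrite (basis_card basisBM) (basis_card basisBN) rM rN.
set adj := [rel a b | _]; move=> S sSBM; rewrite leqNgt; apply/negP=> ltNS.
have sNBN : neighbours adj S \subset BN.
  by apply/subsetP=> b /[!inE] /exists_inP[a _ /andP[]].
set T := BN :\: neighbours adj S.
have sSTM : sumset S (0 |: T) \subset E M.
  apply/subsetP=> _ /sumsetP[s sS [t /setU1P[->|tT] ->]].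
    by rewrite addr0 (subsetP (basis_sub basisBM)) ?(subsetP sSBM).
  move: tT; rewrite !inE => /andP[tNS tBN]; apply: contraR tNS => stM.
  by apply/exists_inP; exists s; rewrite //= tBN.
have cT : #|T| = (n - #|neighbours adj S|)%N.
  by rewrite cardsD (setIidPr sNBN) (basis_card basisBN) rN.
have leSn : (#|S| <= n)%N by rewrite -rM -(basis_card basisBM) subset_leq_card.
have sTEN : T \subset E N := subset_trans (subsetDl _ _) (basis_sub basisBN).
have nS : S != set0 by rewrite -card_gt0 (leq_ltn_trans _ ltNS).
have [|||/nprog //|[a aM]] := progression_or_translateI nS sTEN n0N sSTM.
- by rewrite cM cT; lia.
- by rewrite cM.
- by rewrite cM.
- by rewrite cM; apply: translateI.
Qed.
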